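(* If $F$ satisfies Assumption 1, then for every $v\in[0,1]$ with $F(b^*_{v,F})>0$, $$F(b^*_{v,F})\ \ge\ \frac{F(v)}{e}.$$
   Context: Assumption 1: $F$ is a cumulative distribution function on $[0,1]$ which is continuously differentiable with density $f=F'$ and is strictly log-concave (equivalently $f/F$ is strictly decreasing on $(0,1)$). $U_{v,F}(b)=(v-b)F(b)$ and $b^*_{v,F}=\max\{\operatorname{argmax}_{b\in[0,1]}U_{v,F}(b)\}$. *)

From Stdlib Require Export Reals.
Open Scope R_scope.

Definition I01 (x : R) : Prop := 0 <= x <= 1.

Definition is_cdf01 (F : R -> R) : Prop :=
  (forall x, I01 x -> 0 <= F x <= 1) /\
  (forall x y, I01 x -> I01 y -> x <= y -> F x <= F y) /\
  F 1 = 1.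

Definition has_derivative_on01 (F f : R -> R) : Prop :=
  forall x, I01 x ->
    limit1_in (fun y => (F y - F x) / (y - x))
              (fun y => I01 y /\ y <> x) (f x) x.

Definition continuous_on01 (g : R -> R) : Prop :=
  forall x, I01 x -> forall eps, 0 < eps ->
    exists delta, 0 < delta /\
      forall y, I01 y -> Rabs (y - x) < delta -> Rabs (g y - g x) < eps.

(* Assumption 1: F is a CDF on [0,1], continuously differentiable with
   density f = F', and strictly log-concave, i.e. f/F strictly decreasing
   on (0,1). *)
Definition assumption1 (F f : R -> R) : Prop :=
  is_cdf01 F /\
  has_derivative_on01 F f /\
  continuous_on01 f /\
  (forall x y, 0 < x < 1 -> 0 < y < 1 -> x < y -> f y / F y < f x / F x).

Definition U (v : R) (F : R -> R) (b : R) : R := (v - b) * F b.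

Definition is_argmax (v : R) (F : R -> R) (b : R) : Prop :=
  I01 b /\ forall b', I01 b' -> U v F b' <= U v F b.

Definition is_bstar (v : R) (F : R -> R) (b : R) : Prop :=
  is_argmax v F b /\ forall b', is_argmax v F b' -> b' <= b.

From Stdlib Require Import Reals Lra.
From Coquelicot Require Import Coquelicot.
Open Scope R_scope.

(* Let b = b*_{v,F} with F b > 0.  Since U_{v,F} v = 0 and
   U_{v,F} b < 0 whenever b > v, we have b <= v, and the case b = v is
   immediate.  For b < v:
   - first-order condition: letting y decrease to b in U(y) <= U(b) gives
     f(b) (v - b) <= F(b), i.e. (f/F)(b) (v - b) <= 1;
   - monotonicity: f/F is strictly decreasing on (0,1) and continuous within
     [0,1] wherever F > 0, hence (f/F)(c) <= (f/F)(b) for all c in [b,v];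
   - mean value theorem for ln F on [b,v]:
     ln F(v) - ln F(b) = (f/F)(c) (v - b) <= (f/F)(b) (v - b) <= 1,
   so F(v) <= e F(b). *)

Lemma limit_le_of_frequently (h : R -> R) (D : R -> Prop) (L x0 C : R) :
  limit1_in h D L x0 ->
  (forall alp, alp > 0 -> exists y, D y /\ Rabs (y - x0) < alp /\ h y <= C) ->
  L <= C.
Proof.
  intros Hlim Hfreq.
  destruct (Rle_lt_dec L C) as [HLC | HCL]; [exact HLC | exfalso].
  destruct (Hlim (L - C) ltac:(lra)) as [alp [Halp Hnear]].
  destruct (Hfreq alp Halp) as [y [HDy [Hyx Hhy]]].
  specialize (Hnear y (conj HDy Hyx)); simpl in Hnear; unfold Rdist in Hnear.
  apply Rabs_def2 in Hnear; lra.
Qed.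

Lemma limit_ge_of_frequently (h : R -> R) (D : R -> Prop) (L x0 C : R) :
  limit1_in h D L x0 ->
  (forall alp, alp > 0 -> exists y, D y /\ Rabs (y - x0) < alp /\ C <= h y) ->
  C <= L.
Proof.
  intros Hlim Hfreq.
  enough (- L <= - C) by lra.
  apply (limit_le_of_frequently (fun y => - h y) D (- L) x0 (- C)).
  - exact (limit_Ropp h D L x0 Hlim).
  - intros alp Halp; destruct (Hfreq alp Halp) as [y [HDy [Hyx Hhy]]].
    exists y; repeat split; [exact HDy | exact Hyx | lra].
Qed.

Lemma approach_from_right (x z alp : R) :
  x < z -> alp > 0 -> exists y, x < y < z /\ Rabs (y - x) < alp.
Proof.
  intros Hxz Halp; exists (x + Rmin alp (z - x) / 2).
  pose proof (Rmin_l alp (z - x)); pose proof (Rmin_r alp (z - x)).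
  assert (0 < Rmin alp (z - x)) by (apply Rmin_glb_lt; lra).
  split; [lra | rewrite Rabs_right; lra].
Qed.

Lemma approach_from_left (x z alp : R) :
  z < x -> alp > 0 -> exists y, z < y < x /\ Rabs (y - x) < alp.
Proof.
  intros Hzx Halp; exists (x - Rmin alp (x - z) / 2).
  pose proof (Rmin_l alp (x - z)); pose proof (Rmin_r alp (x - z)).
  assert (0 < Rmin alp (x - z)) by (apply Rmin_glb_lt; lra).
  split; [lra | rewrite Rabs_left; lra].
Qed.

Lemma continuous_on01_limit (g : R -> R) (x : R) :
  continuous_on01 g -> I01 x -> limit1_in g I01 (g x) x.
Proof.
  intros Hg Hx eps Heps; destruct (Hg x Hx eps Heps) as [d [Hd Hnear]].
  exists d; split; [exact Hd |]; intros y [Hy Hyx]; exact (Hnear y Hy Hyx).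
Qed.

(* A function differentiable within [0,1] at x is continuous within [0,1]
   there: F y - F x is the difference quotient times (y - x), which tends
   to f x * 0. *)
Lemma derivative_continuous01 (F f : R -> R) (x : R) :
  has_derivative_on01 F f -> I01 x -> limit1_in F I01 (F x) x.
Proof.
  intros HD Hx.
  assert (Hprod : limit1_in (fun y => (F y - F x) / (y - x) * (y - x))
                    (fun y => I01 y /\ y <> x) (f x * (x - x)) x).
  { apply limit_mul; [exact (HD x Hx) |].
    apply limit_minus; [apply lim_x | apply (limit_free (fun _ => x) _ x)]. }
  rewrite Rminus_diag, Rmult_0_r in Hprod.
  intros eps Heps; destruct (Hprod eps Heps) as [d [Hd Hnear]].
  exists d; split; [exact Hd |]; intros y [Hy Hyx]; simpl; unfold Rdist.
  destruct (Req_dec y x) as [-> | Hne].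
  { rewrite Rminus_diag, Rabs_R0; exact Heps. }
  specialize (Hnear y (conj (conj Hy Hne) Hyx)); simpl in Hnear; unfold Rdist in Hnear.
  replace (F y - F x) with ((F y - F x) / (y - x) * (y - x) - 0) by (field; lra).
  exact Hnear.
Qed.

Definition clamp01 (x : R) : R := Rmax 0 (Rmin 1 x).

Lemma clamp01_I01 (x : R) : I01 (clamp01 x).
Proof. unfold clamp01, I01, Rmax, Rmin; repeat destruct Rle_dec; lra. Qed.

Lemma clamp01_id (x : R) : I01 x -> clamp01 x = x.
Proof. unfold clamp01, I01, Rmax, Rmin; intros; repeat destruct Rle_dec; lra. Qed.

Lemma clamp01_lipschitz (x y : R) : Rabs (clamp01 y - clamp01 x) <= Rabs (y - x).
Proof.
  unfold clamp01, Rmax, Rmin; repeat destruct Rle_dec;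
  unfold Rabs; repeat destruct Rcase_abs; lra.
Qed.

Lemma continuity_pt_clamp01 (g : R -> R) :
  (forall x, I01 x -> limit1_in g I01 (g x) x) ->
  forall x, continuity_pt (fun y => g (clamp01 y)) x.
Proof.
  intros Hg x eps Heps.
  destruct (Hg (clamp01 x) (clamp01_I01 x) eps Heps) as [d [Hd Hnear]].
  exists d; split; [exact Hd |]; intros y [_ Hyx].
  apply (Hnear (clamp01 y)); split; [apply clamp01_I01 |].
  simpl in *; unfold Rdist in *; pose proof (clamp01_lipschitz x y); lra.
Qed.

Lemma derivable_clamp01_interior (F f : R -> R) (c : R) :
  has_derivative_on01 F f -> 0 < c < 1 ->
  derivable_pt_lim (fun z => F (clamp01 z)) c (f c).
Proof.
  intros HD Hc eps Heps.
  destruct (HD c ltac:(unfold I01; lra) eps Heps) as [a [Ha Hnear]].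
  assert (Hd : 0 < Rmin a (Rmin c (1 - c))) by (repeat apply Rmin_glb_lt; lra).
  exists (mkposreal _ Hd); simpl; intros h Hh Hha.
  pose proof (Rmin_l a (Rmin c (1 - c))); pose proof (Rmin_r a (Rmin c (1 - c))).
  pose proof (Rmin_l c (1 - c)); pose proof (Rmin_r c (1 - c)).
  apply Rabs_def2 in Hha.
  rewrite (clamp01_id (c + h)), (clamp01_id c) by (unfold I01; lra).
  specialize (Hnear (c + h)); replace (c + h - c) with h in Hnear by ring.
  apply Hnear; split; [split; [unfold I01; lra | lra] | simpl; unfold Rdist; apply Rabs_def1; lra].
Qed.

Lemma cdf_positive_above (F : R -> R) (b x : R) :
  is_cdf01 F -> I01 b -> 0 < F b -> b <= x <= 1 -> 0 < F x.
Proof.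
  intros [_ [Hmono _]] Hb HFb Hx; unfold I01 in *.
  pose proof (Hmono b x Hb ltac:(lra) ltac:(lra)); lra.
Qed.

Lemma ratio_limit01 (F f : R -> R) (x : R) :
  continuous_on01 f -> has_derivative_on01 F f -> I01 x -> 0 < F x ->
  limit1_in (fun y => f y / F y) I01 (f x / F x) x.
Proof.
  intros Hf HD Hx HFx; unfold Rdiv; apply limit_mul.
  - exact (continuous_on01_limit f x Hf Hx).
  - apply limit_inv; [exact (derivative_continuous01 F f x HD Hx) | lra].
Qed.

(* A function strictly decreasing on (0,1) and continuous within [0,1] at
   x < y is still nonincreasing from x to y: compare both endpoints with
   the midpoint and pass to the limit. *)
Lemma antitone_to_endpoints (g : R -> R) (x y : R) :
  I01 x -> I01 y -> x < y ->
  limit1_in g I01 (g x) x -> limit1_in g I01 (g y) y ->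
  (forall s t, 0 < s < 1 -> 0 < t < 1 -> s < t -> g t < g s) ->
  g y <= g x.
Proof.
  intros Hx Hy Hxy Hlimx Hlimy Hdec; unfold I01 in *.
  set (m := (x + y) / 2).
  assert (Hleft : g m <= g x).
  { apply (limit_ge_of_frequently g I01 (g x) x (g m) Hlimx).
    intros alp Halp.
    destruct (approach_from_right x m alp) as [s [Hs Hsx]]; [unfold m; lra | exact Halp |].
    exists s; unfold I01, m in *; repeat split; [lra | lra | exact Hsx |].
    left; apply Hdec; lra. }
  assert (Hright : g y <= g m).
  { apply (limit_le_of_frequently g I01 (g y) y (g m) Hlimy).
    intros alp Halp.
    destruct (approach_from_left y m alp) as [t [Ht Hty]]; [unfold m; lra | exact Halp |].
    exists t; unfold I01, m in *; repeat split; [lra | lra | exact Hty |].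
    left; apply Hdec; lra. }
  lra.
Qed.

(* A maximiser of U_{v,F} with F b > 0 lies at or below v, since U v = 0
   while U is negative above v. *)
Lemma argmax_le_value (F : R -> R) (v b : R) :
  I01 v -> is_argmax v F b -> 0 < F b -> b <= v.
Proof.
  intros Hv [_ Hmax] HFb.
  destruct (Rle_lt_dec b v) as [Hbv | Hvb]; [exact Hbv |].
  specialize (Hmax v Hv); unfold U in Hmax.
  rewrite Rminus_diag, Rmult_0_l in Hmax; nra.
Qed.

(* First-order condition at a maximiser b < v: U(y) <= U(b) for y > b
   rewrites as (v - y) (F y - F b) / (y - b) <= F b, and y -> b gives
   f b (v - b) <= F b. *)
Lemma first_order_condition (F f : R -> R) (v b : R) :
  has_derivative_on01 F f -> I01 v -> is_argmax v F b -> b < v ->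
  f b * (v - b) <= F b.
Proof.
  intros HD Hv [Hb Hmax] Hbv.
  assert (Hlim : limit1_in (fun y => (F y - F b) / (y - b) * (v - y))
                   (fun y => I01 y /\ y <> b) (f b * (v - b)) b).
  { apply limit_mul; [exact (HD b Hb) |].
    apply limit_minus; [apply (limit_free (fun _ => v) _ v) | apply lim_x]. }
  apply (limit_le_of_frequently _ _ _ _ _ Hlim).
  intros alp Halp.
  destruct (approach_from_right b v alp) as [y [Hy Hyb]]; [exact Hbv | exact Halp |].
  unfold I01 in *.
  exists y; split; [split; lra |]; split; [exact Hyb |].
  pose proof (Hmax y ltac:(unfold I01; lra)) as HU; unfold U in HU.
  apply (Rmult_le_reg_r (y - b)); [lra |].
  replace ((F y - F b) / (y - b) * (v - y) * (y - b)) with ((F y - F b) * (v - y))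
    by (field; lra).
  nra.
Qed.

Lemma log_mean_value (F f : R -> R) (b v : R) :
  is_cdf01 F -> has_derivative_on01 F f -> I01 b -> I01 v -> b < v -> 0 < F b ->
  exists c, b <= c <= v /\ ln (F v) - ln (F b) = f c / F c * (v - b).
Proof.
  intros HC HD Hb Hv Hbv HFb.
  assert (Hpos : forall x, b <= x <= v -> 0 < F x)
    by (intros x Hx; apply (cdf_positive_above F b x HC Hb HFb); unfold I01 in *; lra).
  assert (HFcont : forall x, continuity_pt (fun z => F (clamp01 z)) x)
    by (apply continuity_pt_clamp01; intros x Hx; exact (derivative_continuous01 F f x HD Hx)).
  unfold I01 in *.
  destruct (MVT_gen (fun z => ln (F (clamp01 z))) b v (fun z => f z / F z)) as [c [Hc Heq]].
  - rewrite Rmin_left, Rmax_right by lra; intros x Hx.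
    apply is_derive_Reals.
    replace (f x / F x) with (/ F (clamp01 x) * f x)
      by (rewrite clamp01_id by (unfold I01; lra); field; apply Rgt_not_eq, Hpos; lra).
    apply (derivable_pt_lim_comp (fun z => F (clamp01 z)) ln).
    + apply derivable_clamp01_interior; [exact HD | lra].
    + apply derivable_pt_lim_ln; rewrite clamp01_id by (unfold I01; lra); apply Hpos; lra.
  - rewrite Rmin_left, Rmax_right by lra; intros x Hx.
    apply (continuity_pt_comp (fun z => F (clamp01 z)) ln); [apply HFcont |].
    apply derivable_continuous_pt; exists (/ F (clamp01 x)).
    apply derivable_pt_lim_ln; rewrite clamp01_id by (unfold I01; lra); apply Hpos; lra.
  - rewrite Rmin_left, Rmax_right in Hc by lra.
    rewrite (clamp01_id v), (clamp01_id b) in Heq by (unfold I01; lra).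
    exists c; split; [exact Hc | exact Heq].
Qed.

Lemma log_growth_le_one (F f : R -> R) (v b : R) :
  assumption1 F f -> I01 v -> is_argmax v F b -> b < v -> 0 < F b ->
  ln (F v) <= ln (F b) + 1.
Proof.
  intros [HC [HD [Hf Hdec]]] Hv Harg Hbv HFb.
  pose proof Harg as [Hb _].
  destruct (log_mean_value F f b v HC HD Hb Hv Hbv HFb) as [c [Hc Hmv]].
  assert (Hratio : f c / F c <= f b / F b).
  { destruct (Req_dec c b) as [-> | Hcb]; [lra |].
    assert (Hc01 : I01 c) by (unfold I01 in *; lra).
    apply (antitone_to_endpoints (fun y => f y / F y)); [exact Hb | exact Hc01 | lra | | | exact Hdec].
    - exact (ratio_limit01 F f b Hf HD Hb HFb).
    - apply (ratio_limit01 F f c Hf HD Hc01).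
      apply (cdf_positive_above F b c HC Hb HFb); unfold I01 in *; lra. }
  assert (Hfoc : f b / F b * (v - b) <= 1).
  { apply (Rmult_le_reg_r (F b)); [exact HFb |].
    replace (f b / F b * (v - b) * F b) with (f b * (v - b)) by (field; lra).
    rewrite Rmult_1_l; exact (first_order_condition F f v b HD Hv Harg Hbv). }
  assert (f c / F c * (v - b) <= f b / F b * (v - b)) by (apply Rmult_le_compat_r; lra).
  lra.
Qed.

Theorem lemma4 (F f : R -> R) (HF : assumption1 F f) (v : R) (Hv : I01 v)
  (b : R) (Hb : is_bstar v F b) (Hpos : 0 < F b) :
  F b >= F v / exp 1.
Proof.
  destruct Hb as [Harg _].
  pose proof (exp_pos 1) as He.
  pose proof (argmax_le_value F v b Hv Harg Hpos) as Hbv.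
  assert (HFv : 0 < F v)
    by (destruct HF as [HC _]; apply (cdf_positive_above F b v HC (proj1 Harg) Hpos); unfold I01 in *; lra).
  assert (Hln : ln (F v) <= ln (F b) + 1).
  { destruct (Req_dec b v) as [<- | Hne]; [lra |].
    apply (log_growth_le_one F f v b HF Hv Harg); [lra | exact Hpos]. }
  assert (Hgrowth : F v <= F b * exp 1).
  { destruct (Rle_lt_dec (F v) (F b * exp 1)) as [Hle | Hgt]; [exact Hle | exfalso].
    pose proof (ln_increasing _ _ (Rmult_lt_0_compat _ _ Hpos He) Hgt) as Hlt.
    rewrite ln_mult, ln_exp in Hlt by lra; lra. }
  apply Rle_ge, (Rmult_le_reg_r (exp 1)); [exact He |].
  unfold Rdiv; rewrite Rmult_assoc, Rinv_l by lra; lra.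
Qed.
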